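(* There exists a sequence $(G_n)_{n\in\mathbb{N}}$ of graphs such that $|V(G_n)|=n$ for all $n$, $R_2(G_n)=O(n)$ and $R_3(G_n)=\Omega(n\log n)$.
   Context: For a graph $G$ and integer $r\geqslant 2$, the $r$-colour Ramsey number $R_r(G)$ is the smallest integer $N$ such that every colouring of the edges of the complete graph $K_N$ with $r$ colours contains a copy of $G$ all of whose edges have the same colour. *)

From Stdlib Require Import ClassicalEpsilon.
From mathcomp Require Import all_boot.
Set Implicit Arguments. Unset Strict Implicit. Unset Printing Implicit Defensive.

Definition simple_graph (n : nat) (G : rel 'I_n) : Prop :=
  symmetric G /\ irreflexive G.

(* An r-colouring of the edges of K_N: a colour for every 2-subset {x,y} of
   'I_N (values on sets that are not 2-subsets are irrelevant). *)
Definition edge_colouring (r N : nat) := {ffun {set 'I_N} -> 'I_r}.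

Definition has_mono_copy (n : nat) (G : rel 'I_n) (r N : nat)
    (c : edge_colouring r N) : bool :=
  [exists f : {ffun 'I_n -> 'I_N}, injectiveb f &&
     [exists i : 'I_r, [forall u, forall v, G u v ==> (c [set f u; f v] == i)]]].

Definition ramsey_prop (n : nat) (G : rel 'I_n) (r : nat) (N : nat) : bool :=
  [forall c : edge_colouring r N, has_mono_copy G c].

(* R_r(G): the smallest such N (defined as 0 if no such N exists, which by
   Ramsey's theorem never happens for r >= 1). *)
Definition ramsey_number (r n : nat) (G : rel 'I_n) : nat :=
  match excluded_middle_informative (exists N, ramsey_prop G r N) with
  | left h => ex_minn h
  | right _ => 0
  end.

(* G_n is a clique K_k, k = log_9 n + 1, plus a disjoint star K_{1,d} with
   d = n / 2k leaves.  Two colours: among 3n points the Erdos-Szekeres bound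
   gives a monochromatic K_k, say red.  If some point outside it has d red
   neighbours outside it we are done; otherwise red degrees there are below d,
   so a greedy choice gives a blue K_k, and any remaining point has at least d
   blue neighbours among the remaining ones.  Three colours: split t^2 d points
   (t = log_9 n) into t superblocks of t blocks of d points and colour a pair
   by whether it shares a block, only a superblock, or neither.  A star of the
   first colour lies in one block, too small for d + 1 vertices, and a clique
   of either other colour has at most t vertices, so R_3(G_n) > t^2 d, which
   is of order n log n. *)

From mathcomp Require Import all_boot zify.
From Stdlib Require Import ClassicalEpsilon.
Set Implicit Arguments. Unset Strict Implicit. Unset Printing Implicit Defensive.

Lemma ramsey_number_le r n (G : rel 'I_n) N :
  ramsey_prop G r N -> ramsey_number r G <= N.
Proof.
move=> GN; rewrite /ramsey_number; case: excluded_middle_informative => [h|] //.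
by case: ex_minnP => m _; apply.
Qed.

Lemma ramsey_number_gt r n (G : rel 'I_n) N B : ramsey_prop G r N ->
  (forall M, M <= B -> ~~ ramsey_prop G r M) -> B < ramsey_number r G.
Proof.
move=> GN small; rewrite /ramsey_number.
case: excluded_middle_informative => [h|[]]; last by exists N.
case: ex_minnP => m Gm _; rewrite ltnNge; apply: contraL Gm; exact: small.
Qed.

Section Colourings.

Variables (r N : nat) (c : edge_colouring r N).

Definition monochromatic (i : 'I_r) (Q : {set 'I_N}) :=
  {in Q &, forall x y, x != y -> c [set x; y] = i}.

Definition nbhd (i : 'I_r) (S : {set 'I_N}) (v : 'I_N) :=
  [set y in S :\ v | c [set v; y] == i].

Lemma monochromatic1 i v : monochromatic i [set v].
Proof. by move=> x y /set1P -> /set1P ->; rewrite eqxx. Qed.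

Lemma monochromaticU1 i v (Q : {set 'I_N}) : monochromatic i Q ->
  {in Q, forall y, c [set v; y] = i} -> monochromatic i (v |: Q).
Proof.
move=> monoQ vQ x y /setU1P[-> | Qx] /setU1P[-> | Qy]; rewrite ?eqxx // => xy.
- exact: vQ.
- by rewrite setUC; apply: vQ.
- exact: monoQ xy.
Qed.

Lemma nbhd_sub i (S : {set 'I_N}) v : nbhd i S v \subset S :\ v.
Proof. by apply/subsetP => y; rewrite inE => /andP[]. Qed.

Lemma nbhdS i (S T : {set 'I_N}) v : S \subset T -> nbhd i S v \subset nbhd i T v.
Proof.
move=> ST; apply/subsetP => y; rewrite !inE => /andP[/andP[-> Sy] ->].
by rewrite (subsetP ST).
Qed.

Lemma card_nbhd_partition (S : {set 'I_N}) v : #|S :\ v| = \sum_(j < r) #|nbhd j S v|.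
Proof.
rewrite -sum1_card (partition_big (fun y => c [set v; y]) xpredT) //=.
by apply: eq_bigr => j _; rewrite sum1dep_card.
Qed.

Lemma large_nbhd (S : {set 'I_N}) v t : v \in S -> r.+1 ^ t.+1 <= #|S| ->
  exists j, r.+1 ^ t <= #|nbhd j S v|.
Proof.
move=> Sv bigS; apply/existsP; apply: contraLR bigS.
rewrite negb_exists => /forallP small.
have r_gt0 : 0 < r by case: (c set0) => m; lia.
have P_gt0 : 0 < r.+1 ^ t by rewrite expn_gt0.
have : \sum_(j < r) #|nbhd j S v| <= \sum_(j < r) (r.+1 ^ t).-1.
  by apply: leq_sum => j _; move: (small j); rewrite -ltnNge; lia.
rewrite -card_nbhd_partition sum_nat_const card_ord [#|S|](cardsD1 v) Sv expnS.
move: P_gt0; move: (r.+1 ^ t) => P; nia.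
Qed.

(* Erdos-Szekeres: recurse into the largest colour class of a vertex's
   neighbourhood, lowering the target size of that colour by one. *)
Lemma ramsey_mono_clique t (a : 'I_r -> nat) (W : {set 'I_N}) :
  \sum_i a i <= t -> r.+1 ^ t <= #|W| ->
  exists i (Q : {set 'I_N}), [/\ Q \subset W, #|Q| = (a i).+1 & monochromatic i Q].
Proof.
elim: t a W => [|t IH] a W sum_a bigW.
  have /card_gt0P [w Ww] : 0 < #|W| by rewrite expn0 in bigW.
  exists (c [set w]), [set w]; split; [by rewrite sub1set | | exact: monochromatic1].
  by move: sum_a; rewrite cards1 (bigD1 (c [set w])) //=; case: (a _).
have /card_gt0P [v Wv] : 0 < #|W| by apply: leq_trans bigW; rewrite expn_gt0.
have [j bigWj] := large_nbhd Wv bigW.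
have Wj_sub : nbhd j W v \subset W :\ v := nbhd_sub j W v.
case aj: (a j) => [|aj'].
  by exists j, [set v]; rewrite sub1set cards1 aj; split=> //; apply: monochromatic1.
pose a' i := if i == j then aj' else a i.
have sum_a' : \sum_i a' i <= t.
  move: sum_a; rewrite (bigD1 j) //= [in X in _ -> X](bigD1 j) //= /a' eqxx aj.
  by under [in X in _ -> X]eq_bigr => i /negbTE -> do [].
have [i [Q [QWj cardQ monoQ]]] := IH a' _ sum_a' bigWj.
have QW : Q \subset W :\ v := subset_trans QWj Wj_sub.
case: (eqVneq i j) cardQ monoQ => [-> | ij] cardQ monoQ; last first.
  exists i, Q; split; rewrite // ?cardQ /a' ?(negbTE ij) //.
  by apply: subset_trans QW (subsetDl _ _).
exists j, (v |: Q); split.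
- by rewrite subUset sub1set Wv (subset_trans QW (subsetDl _ _)).
- rewrite cardsU1 cardQ /a' eqxx aj.
  by have -> : v \notin Q by apply/negP => /(subsetP QW); rewrite !inE eqxx.
- apply: monochromaticU1 => // y /(subsetP QWj); rewrite inE => /andP[_ /eqP //].
Qed.

Lemma notin_nbhd_colour i (S : {set 'I_N}) v y :
  y \in S :\ v :\: nbhd i S v -> c [set v; y] != i.
Proof. by rewrite !inE => /and3P[+ yv yS]; rewrite yv yS. Qed.

Lemma low_degree_avoiding_set i d m (S : {set 'I_N}) :
  {in S, forall v, #|nbhd i S v| < d} -> m * d < #|S| ->
  exists Q : {set 'I_N}, [/\ Q \subset S, #|Q| = m.+1 &
    {in Q &, forall x y, x != y -> c [set x; y] != i}].
Proof.
elim: m S => [|m IH] S sparseS bigS.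
  have /card_gt0P [v Sv] : 0 < #|S| by lia.
  exists [set v]; rewrite sub1set cards1; split=> // x y /set1P-> /set1P->.
  by rewrite eqxx.
have /card_gt0P [v Sv] : 0 < #|S| by lia.
pose S' := S :\ v :\: nbhd i S v.
have S'S : S' \subset S := subset_trans (subsetDl _ _) (subsetDl _ _).
have bigS' : m * d < #|S'|.
  move: bigS (sparseS v Sv); rewrite /S' cardsDS ?nbhd_sub // [#|S|](cardsD1 v) Sv.
  have := subset_leq_card (nbhd_sub i S v); lia.
have sparseS' : {in S', forall w, #|nbhd i S' w| < d}.
  move=> w S'w; apply: leq_ltn_trans (sparseS w (subsetP S'S w S'w)).
  exact/subset_leq_card/nbhdS.
have [Q [QS' cardQ avoidQ]] := IH S' sparseS' bigS'.
have vQ : v \notin Q by apply/negP => /(subsetP QS'); rewrite !inE eqxx andbF.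
exists (v |: Q); split.
- by rewrite subUset sub1set Sv (subset_trans QS' S'S).
- by rewrite cardsU1 vQ cardQ.
- move=> x y /setU1P[-> | Qx] /setU1P[-> | Qy]; rewrite ?eqxx // => xy.
  + exact/notin_nbhd_colour/(subsetP QS').
  + by rewrite setUC; apply/notin_nbhd_colour/(subsetP QS').
  + exact: avoidQ xy.
Qed.

End Colourings.

Lemma has_mono_copy_of_seq n (G : rel 'I_n) r N (c : edge_colouring r N)
    (s : seq 'I_N) x0 i :
  uniq s -> n <= N ->
  (forall u v, G u v ->
     [/\ u < size s, v < size s & c [set nth x0 s u; nth x0 s v] = i]) ->
  has_mono_copy G c.
Proof.
move=> s_uniq leNn Gs.
pose s' := s ++ [seq x <- enum 'I_N | x \notin s].
have s'_uniq : uniq s'.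
  rewrite cat_uniq s_uniq filter_uniq ?enum_uniq // andbT.
  by apply/hasPn => x; rewrite mem_filter => /andP[].
have size_s' : size s' = N.
  rewrite -[RHS](size_enum_ord N).
  apply/perm_size/uniq_perm; rewrite ?enum_uniq // => x.
  by rewrite mem_cat mem_filter mem_enum /=; case: (x \in s).
apply/existsP; exists [ffun u : 'I_n => nth x0 s' u]; apply/andP; split.
  apply/injectiveP => u v; rewrite !ffunE => /eqP.
  by rewrite nth_uniq ?size_s' ?(leq_trans (ltn_ord _) leNn) // => /eqP/val_inj.
apply/existsP; exists i; apply/forallP => u; apply/forallP => v.
by apply/implyP => /Gs[us vs <-]; rewrite !ffunE /s' !nth_cat us vs.
Qed.

Lemma ramsey_prop_exp r n (G : rel 'I_n) N : irreflexive G ->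
  r.+1 ^ (r * n.-1) <= N -> ramsey_prop G r N.
Proof.
move=> G_irr bigN; apply/forallP => c.
have sum_a : \sum_(i < r) n.-1 <= r * n.-1 by rewrite sum_nat_const card_ord.
have [|i [Q [_ cardQ monoQ]]] := ramsey_mono_clique c sum_a (W := setT).
  by rewrite cardsT card_ord.
have /card_gt0P [x0 _] : 0 < #|Q| by rewrite cardQ.
have leQn : n <= #|Q| by rewrite cardQ leqSpred.
have lt_enum u : u < n -> u < size (enum Q) by rewrite -cardE => /leq_trans; apply.
apply: (has_mono_copy_of_seq (x0 := x0) (i := i) (enum_uniq Q)).
  by rewrite -(card_ord N); apply: leq_trans leQn (max_card _).
move=> u v Guv; have [us vs] := (lt_enum u (ltn_ord u), lt_enum v (ltn_ord v)).
have inQ w : w < size (enum Q) -> nth x0 (enum Q) w \in Q.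
  by move=> ?; rewrite -mem_enum mem_nth.
split=> //; apply: monoQ; rewrite ?inQ // nth_uniq ?enum_uniq //.
by apply: contraTneq Guv => /val_inj ->; rewrite G_irr.
Qed.

Definition clique_star (n k d : nat) : rel 'I_n := fun u v =>
  (u != v) && [|| (u < k) && (v < k),
                  (u == k :> nat) && (k < v <= k + d)
                | (v == k :> nat) && (k < u <= k + d)].
Arguments clique_star : clear implicits.

Lemma clique_star_simple n k d : simple_graph (clique_star n k d).
Proof.
split=> [u v | u]; last by rewrite /clique_star eqxx.
rewrite /clique_star eq_sym [(v < k) && _]andbC.
by congr (_ && _); case: (_ && _); rewrite //= orbC.
Qed.

Lemma has_mono_copy_clique_star n k d r N (c : edge_colouring r N) i
    (Q L : {set 'I_N}) v0 :
  #|Q| = k -> d <= #|L| -> v0 \notin Q -> v0 \notin L -> [disjoint Q & L] ->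
  n <= N -> monochromatic c i Q -> {in L, forall y, c [set v0; y] = i} ->
  has_mono_copy (clique_star n k d) c.
Proof.
move=> cardQ cardL Qv0 Lv0 QL leNn monoQ starL.
pose s := enum Q ++ v0 :: enum L.
have s_uniq : uniq s.
  rewrite cat_uniq /= !mem_enum (negbTE Qv0) Lv0 !enum_uniq /= andbT.
  by apply/hasPn => y; rewrite !mem_enum => /(disjointFl QL) ->.
have size_s : size s = k + #|L|.+1 by rewrite size_cat /= -!cardE cardQ.
have sQ u : u < k -> nth v0 s u \in Q.
  by move=> ltuk; rewrite nth_cat -cardE cardQ ltuk -mem_enum mem_nth // -cardE cardQ.
have sk : nth v0 s k = v0 by rewrite nth_cat -cardE cardQ ltnn subnn.
have sL u : k < u <= k + d -> nth v0 s u \in L.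
  move=> /andP[ltku leukd]; rewrite nth_cat -cardE cardQ ltnNge ltnW //=.
  rewrite -(subnSK ltku) /= -mem_enum mem_nth // -cardE (leq_trans _ cardL) //; lia.
apply: (has_mono_copy_of_seq (x0 := v0) (i := i) s_uniq leNn) => u v.
case/andP=> uv /or3P[/andP[ltuk ltvk] | /andP[/eqP uk kv] | /andP[/eqP vk ku]].
- split; rewrite ?size_s; try lia.
  by apply: monoQ; rewrite ?sQ // nth_uniq ?size_s; try lia.
- by split; rewrite ?size_s ?uk ?sk ?starL ?sL //; lia.
- by split; rewrite ?size_s ?vk ?sk 1?setUC ?starL ?sL //; lia.
Qed.

Lemma ord2_neq_rev (i j : 'I_2) : j != i -> j = rev_ord i.
Proof. by case: i j => [[|[|?]] ?] [[|[|?]] ?] //= _; apply: val_inj. Qed.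

Lemma has_mono_copy_of_low_degree n k d N (c : edge_colouring 2 N) i
    (W : {set 'I_N}) :
  0 < k -> {in W, forall v, #|nbhd c i W v| < d} ->
  k.-1 * d < #|W| -> k + 2 * d < #|W| -> n <= N ->
  has_mono_copy (clique_star n k d) c.
Proof.
move=> k_gt0 sparseW bigW bigR leNn.
have [Q [QW cardQ avoidQ]] := low_degree_avoiding_set sparseW bigW.
rewrite prednK // in cardQ.
pose R := W :\: Q.
have cardR : #|R| = #|W| - k by rewrite cardsDS // cardQ.
have /card_gt0P [v0 Rv0] : 0 < #|R| by lia.
have RW : R \subset W := subsetDl _ _.
pose L := R :\ v0 :\: nbhd c i R v0.
have cardL : d <= #|L|.
  have nbR : #|nbhd c i R v0| < d.
    apply: leq_ltn_trans (sparseW v0 (subsetP RW _ Rv0)).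
    exact/subset_leq_card/nbhdS.
  have cardRv0 : #|R :\ v0| = (#|W| - k).-1 by rewrite -cardR [#|R|](cardsD1 v0) Rv0.
  rewrite /L cardsDS ?nbhd_sub // cardRv0; lia.
apply: (has_mono_copy_clique_star (i := rev_ord i) (v0 := v0) cardQ cardL) => //.
- by move: Rv0; rewrite inE => /andP[].
- by rewrite !inE eqxx.
- rewrite disjoint_sym disjoints_subset.
  do 2 apply: subset_trans (subsetDl _ _) _.
  by rewrite /R setDE subsetIr.
- by move=> x y Qx Qy xy; apply/ord2_neq_rev/avoidQ.
- by move=> y Ly; apply/ord2_neq_rev/(notin_nbhd_colour Ly).
Qed.

Lemma clique_star_ramsey2 n k d N : 0 < k ->
  3 ^ (2 * k.-1) <= N -> k.-1 * d + k < N -> 2 * (k + d) < N -> n <= N ->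
  ramsey_prop (clique_star n k d) 2 N.
Proof.
move=> k_gt0 bigN bigW bigR leNn; apply/forallP => c.
have sum_a : \sum_(i < 2) k.-1 <= 2 * k.-1 by rewrite sum_nat_const card_ord.
have [|i [Q [_ cardQ monoQ]]] := ramsey_mono_clique c sum_a (W := setT).
  by rewrite cardsT card_ord.
rewrite prednK // in cardQ.
pose W := ~: Q.
have cardW : #|W| = N - k by rewrite cardsCs setCK card_ord cardQ.
have [v0 /andP[Wv0 big_nb] | sparseW] :=
  pickP [pred v | (v \in W) && (d <= #|nbhd c i W v|)].
  apply: (has_mono_copy_clique_star (i := i) (v0 := v0) cardQ big_nb) => //.
  - by rewrite -in_setC.
  - by rewrite !inE eqxx.
  - rewrite disjoint_sym disjoints_subset.
    exact: subset_trans (nbhd_sub _ _ _ _) (subsetDl _ _).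
  - by move=> y; rewrite inE => /andP[_ /eqP].
apply: (has_mono_copy_of_low_degree (i := i) (W := W)); rewrite ?cardW //; try lia.
by move=> v Wv; move: (sparseW v) => /= /negbT; rewrite Wv ltnNge.
Qed.

Lemma card_le_same_quotient N (A : {set 'I_N}) (g : 'I_N -> nat) m q : 0 < m ->
  {in A &, injective g} -> {in A, forall x, g x %/ m = q} -> #|A| <= m.
Proof.
move=> m_gt0 g_inj gA; rewrite cardE -(size_map g) -(size_iota (q * m) m).
apply: uniq_leq_size => [|_ /mapP[x Ax ->]].
  by rewrite map_inj_in_uniq ?enum_uniq // => x y; rewrite !mem_enum; apply: g_inj.
have Ax' : x \in A by rewrite -mem_enum.
rewrite mem_iota -(gA x Ax').
by have := divn_eq (g x) m; have := ltn_pmod (g x) m_gt0; lia.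
Qed.

Definition collides N (g : 'I_N -> nat) (S : {set 'I_N}) :=
  [exists x in S, exists y in S, (x != y) && (g x == g y)].

Lemma collides2 N (g : 'I_N -> nat) x y :
  x != y -> collides g [set x; y] = (g x == g y).
Proof.
move=> xy; apply/idP/idP => [|gxy]; last first.
  apply/existsP; exists x; rewrite set21 /=.
  by apply/existsP; exists y; rewrite set22 xy.
case/existsP=> x' /andP[/set2P x'E /existsP[y' /andP[/set2P y'E /andP[x'y' /eqP g']]]].
by case: x'E y'E x'y' g' => -> [] -> //; rewrite ?eqxx // => _ ->.
Qed.

Definition block_colouring N t d : edge_colouring 3 N :=
  [ffun S => if collides (fun x => x %/ d) S then @Ordinal 3 2 isT
             else if collides (fun x => x %/ d %/ t) S then @Ordinal 3 1 isT
             else @Ordinal 3 0 isT].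

Lemma block_colouring2 N t d (x y : 'I_N) : x != y ->
  val (block_colouring N t d [set x; y]) =
  if x %/ d == y %/ d then 2 else if x %/ d %/ t == y %/ d %/ t then 1 else 0.
Proof.
move=> xy; rewrite ffunE (collides2 (fun x => x %/ d) xy).
rewrite (collides2 (fun x => x %/ d %/ t) xy).
by case: (x %/ d == y %/ d); case: (x %/ d %/ t == y %/ d %/ t).
Qed.

Lemma block_colour_eq2 N t d (x y : 'I_N) : x != y ->
  (val (block_colouring N t d [set x; y]) == 2) = (x %/ d == y %/ d).
Proof.
move=> xy; rewrite block_colouring2 //.
by case: (x %/ d == y %/ d); case: (x %/ d %/ t == y %/ d %/ t).
Qed.

Lemma block_colour_neq0 N t d (x y : 'I_N) : x != y ->
  (val (block_colouring N t d [set x; y]) != 0) = (x %/ d %/ t == y %/ d %/ t).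
Proof.
move=> xy; rewrite block_colouring2 //.
case: (x %/ d =P y %/ d) => [-> | _]; rewrite ?eqxx //.
by case: (x %/ d %/ t == y %/ d %/ t).
Qed.

Section BlockColouring.

Variables (N t d : nat).
Hypotheses (t_gt0 : 0 < t) (d_gt0 : 0 < d) (N_le : N <= t * t * d).
Let c := block_colouring N t d.

Lemma block_clique_small (i : 'I_3) (K : {set 'I_N}) :
  val i != 2 -> monochromatic c i K -> #|K| <= t.
Proof.
move=> i_neq2 monoK.
have colK x y : x \in K -> y \in K -> x != y -> val (c [set x; y]) = val i.
  by move=> Kx Ky xy; rewrite (monoK x y).
have [i0 | i_neq0] := eqVneq (val i) 0.
  apply: (card_le_same_quotient (g := fun x => x %/ d %/ t) (q := 0)) => //.
    move=> x y Kx Ky; apply: contra_eq => xy.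
    by rewrite -(block_colour_neq0 t d xy) (colK x y) ?i0.
  move=> x _; apply: divn_small; rewrite !ltn_divLR //.
  by apply: leq_trans (ltn_ord x) (leq_trans N_le _); rewrite mulnAC.
have [-> // | /card_gt0P[x0 Kx0]] := posnP #|K|.
apply: (card_le_same_quotient (g := fun x => x %/ d) (q := x0 %/ d %/ t)) => //.
  move=> x y Kx Ky; apply: contra_eq => xy.
  by rewrite -(block_colour_eq2 t d xy) (colK x y).
move=> x Kx; have [-> // | xx0] := eqVneq x x0.
by apply/eqP; rewrite -(block_colour_neq0 t d xx0) (colK x x0).
Qed.

Lemma block_star_small x0 (S : {set 'I_N}) : x0 \in S ->
  {in S, forall y, y != x0 -> val (c [set x0; y]) = 2} -> #|S| <= d.
Proof.
move=> Sx0 starS; apply: (card_le_same_quotient (g := val) (q := x0 %/ d)) => //.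
  by move=> x y _ _; apply: val_inj.
move=> y Sy; have [-> // | yx0] := eqVneq y x0.
have x0y : x0 != y by rewrite eq_sym.
by apply/esym/eqP; rewrite -(block_colour_eq2 t d x0y) starS.
Qed.

End BlockColouring.

Lemma clique_star_block_colouring n k d t N :
  0 < t -> 0 < d -> t < k -> k + d < n -> N <= t * t * d ->
  ~~ has_mono_copy (clique_star n k d) (block_colouring N t d).
Proof.
move=> t_gt0 d_gt0 lt_tk lt_kdn N_le.
apply/negP => /existsP[f /andP[/injectiveP f_inj /existsP[i /forallP mono]]].
have colf u v : clique_star n k d u v -> block_colouring N t d [set f u; f v] = i.
  by move=> Guv; apply/eqP; move/forallP/(_ v)/implyP: (mono u); apply.
have fuv u v : f u != f v -> u != v by apply: contraNneq => ->.
have [i2 | i_neq2] := eqVneq (val i) 2.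
  have le_kdn : k + d.+1 <= n by rewrite addnS.
  pose star_v (u : 'I_d.+1) := widen_ord le_kdn (rshift k u).
  pose S := [set f (star_v u) | u : 'I_d.+1].
  have : #|S| <= d.
    apply: (block_star_small (t := t) d_gt0 (x0 := f (star_v ord0))).
      exact: imset_f.
    move=> _ /imsetP[u _ ->] /fuv; rewrite eq_sym => neq_u; rewrite colf ?i2 //.
    have u_gt0 : 0 < u.
      by rewrite lt0n; apply: contraNneq neq_u => u0; rewrite -val_eqE /= u0.
    rewrite /clique_star neq_u; apply/or3P/Or32.
    by rewrite /= addn0 eqxx /=; have := ltn_ord u; lia.
  rewrite card_imset ?card_ord ?ltnn // => u v /f_inj/(congr1 val)/=/addnI.
  exact: val_inj.
have le_kn : k <= n by lia.
pose K := [set f (widen_ord le_kn u) | u : 'I_k].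
have : #|K| <= t.
  apply: (block_clique_small t_gt0 d_gt0 N_le i_neq2).
  move=> _ _ /imsetP[u _ ->] /imsetP[v _ ->] /fuv neq_uv; apply: colf.
  by rewrite /clique_star neq_uv /= !ltn_ord.
rewrite card_imset ?card_ord; first lia.
by move=> u v /f_inj/(congr1 val) uv; apply: val_inj.
Qed.

Lemma trunc_log2_le_log9 n : trunc_log 2 n <= 4 * trunc_log 9 n + 3.
Proof.
have [-> | n_gt0] := posnP n; first by rewrite !trunc_log0.
rewrite -ltnS -(ltn_exp2l _ _ (isT : 1 < 2)).
apply: leq_ltn_trans (trunc_logP (isT : 1 < 2) n_gt0) _.
apply: leq_trans (trunc_log_ltn n (isT : 1 < 9)) _.
have -> : (4 * trunc_log 9 n + 3).+1 = 4 * (trunc_log 9 n).+1 by lia.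
by rewrite expnM leq_exp2r.
Qed.

Definition log_clique_star n :=
  clique_star n (trunc_log 9 n).+1 (n %/ (2 * (trunc_log 9 n).+1)).
Arguments log_clique_star : clear implicits.

Lemma log_clique_star_params n : 9 <= n ->
  let t := trunc_log 9 n in let d := n %/ (2 * t.+1) in
  [/\ 0 < t, 0 < d, 9 ^ t <= n, 9 * t <= n
    & d * (2 * t.+1) <= n < d.+1 * (2 * t.+1)].
Proof.
move=> n_ge9 t d.
have t_gt0 : 0 < t by rewrite trunc_log_gt0.
have pow_le : 9 ^ t <= n by apply: trunc_logP; lia.
have t_le : 9 * t <= 9 ^ t.
  by rewrite -(prednK t_gt0) expnS leq_mul2l ltn_expl.
have d_le : d * (2 * t.+1) <= n by rewrite leq_divM.
have n_lt : n < d.+1 * (2 * t.+1) by rewrite ltn_ceil.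
split; rewrite ?d_le //; first by rewrite divn_gt0; lia.
lia.
Qed.

Lemma log_clique_star_ramsey2 n : 9 <= n -> ramsey_prop (log_clique_star n) 2 (3 * n).
Proof.
move=> /log_clique_star_params[t_gt0 d_gt0 pow_le t_le /andP[d_le _]].
apply: clique_star_ramsey2 => //=; try nia.
by rewrite expnM; apply: leq_trans pow_le _; rewrite leq_pmull.
Qed.

Lemma log_clique_star_ramsey3_gt n : 9 <= n ->
  trunc_log 9 n * trunc_log 9 n * (n %/ (2 * (trunc_log 9 n).+1))
    < ramsey_number 3 (log_clique_star n).
Proof.
move/log_clique_star_params => [t_gt0 d_gt0 _ t_le /andP[d_le _]].
set t := trunc_log 9 n; set d := n %/ _.
apply: (ramsey_number_gt (N := 4 ^ (3 * n.-1))).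
  by apply: ramsey_prop_exp => //; case: (clique_star_simple n t.+1 d).
move=> M M_le; apply/forallPn; exists (block_colouring M t d).
by apply: clique_star_block_colouring; rewrite // ?ltnSn; nia.
Qed.

Theorem theorem1p3 :
  exists G : forall n : nat, rel 'I_n,
    (forall n, simple_graph (G n)) /\
    (exists C n0 : nat, forall n, n0 <= n -> ramsey_number 2 (G n) <= C * n) /\
    (exists c n0 : nat, 0 < c /\
       forall n, n0 <= n -> n * trunc_log 2 n <= c * ramsey_number 3 (G n)).
Proof.
exists log_clique_star; split; first by move=> n; apply: clique_star_simple.
split.
  exists 3, 9 => n /log_clique_star_ramsey2; exact: ramsey_number_le.
exists 64, 9; split=> // n n_ge9.
have := log_clique_star_ramsey3_gt n_ge9.
have [t_gt0 d_gt0 _ _ /andP[_ n_lt]] := log_clique_star_params n_ge9.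
have := trunc_log2_le_log9 n.
move: t_gt0 d_gt0 n_lt; set t := trunc_log 9 n; set d := n %/ _.
(* n log_2 n < (d + 1) (2t + 2) (4t + 3) <= 56 t^2 d as t, d >= 1. *)
move: (trunc_log 2 n) (ramsey_number _ _) => L R; nia.
Qed.
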